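(* In the standing setting described in the context, there exist constants $B_0,C_0$ such that for all $j\in\mathbb{N}$ and all $\vec x\in\mathbb{C}^d$, $$|m_0((A^\tau)^{-j}\vec x)|\le\Big(1+C_0\min\big(1,\tfrac{|\vec x|}{\beta^j}\big)\Big)\exp\Big(\tfrac{B_0|\mathfrak{Im}(\vec x)|}{\beta^j}\Big).$$
   Context: $\vec x\circ\vec y=\sum_j x_j\overline{y_j}$ for $\vec x,\vec y\in\mathbb{C}^d$; $|\cdot|$ is the Euclidean norm; $\mathfrak{Im}(\vec x)\in\mathbb{R}^d$ is the imaginary part of $\vec x$. $A^\tau$ is the transpose; expansive means all eigenvalues have modulus $>1$. $\beta=\|(A^\tau)^{-1}\|^{-1}$, where $\|\cdot\|$ is the operator norm on the Euclidean space $\mathbb{C}^d$. Standing setting: $A$ is a $d\times d$ expansive integral matrix with $|\det A|=2$ such that $A\mathbb{Z}^d=A^\tau\mathbb{Z}^d$, and $\vec\ell_A,\vec q_A\in\mathbb{Z}^d$ satisfy: $\mathbb{Z}^d=(\vec\ell_A+A\mathbb{Z}^d)\dot\cup A\mathbb{Z}^d$; $\vec q_A\circ A\mathbb{Z}^d\subseteq2\mathbb{Z}$, $\vec q_A\circ(\vec\ell_A+A\mathbb{Z}^d)\subseteq2\mathbb{Z}+1$; for $\vec m\in A\mathbb{Z}^d$, $\vec n\in\mathbb{Z}^d$: $\mathbb{Z}^d=(\vec n-A\mathbb{Z}^d)\dot\cup(\vec\ell_A-\vec m-\vec n+A\mathbb{Z}^d)$; for $\vec m\in\vec\ell_A+A\mathbb{Z}^d$,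 $\vec n\in\mathbb{Z}^d$: $\vec n-A\mathbb{Z}^d=\vec\ell_A-\vec m-\vec n+A\mathbb{Z}^d$. The complex numbers $\{h_{\vec n}\}$ satisfy $\sum_{\vec n}h_{\vec n}\overline{h_{\vec n+\vec k}}=\delta_{\vec0,\vec k}$ ($\vec k\in A\mathbb{Z}^d$), $\sum_{\vec n}h_{\vec n}=\sqrt2$, and vanish outside $\Lambda_0=\mathbb{Z}^d\cap[-N_0,N_0]^d$. $m_0(\vec t)=\frac1{\sqrt2}\sum_{\vec n\in\Lambda_0}h_{\vec n}e^{-i\vec n\circ\vec t}$ for $\vec t\in\mathbb{C}^d$. *)

From HB Require Import structures.
From mathcomp Require Import all_boot all_order all_algebra.
From mathcomp Require Import boolp classical_sets reals sequences exp trigo.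
From mathcomp Require Import complex.
Set Implicit Arguments. Unset Strict Implicit. Unset Printing Implicit Defensive.
Import Order.TTheory GRing.Theory Num.Theory.
Local Open Scope ring_scope.
Local Open Scope complex_scope.

Section Defs.
Variable R : realType.
Local Notation C := (R[i]).

Definition cnorm2 (z : C) : R := (complex.Re z) ^+ 2 + (complex.Im z) ^+ 2.
Definition cabs (z : C) : R := Num.sqrt (cnorm2 z).

Definition cexp (z : C) : C :=
  ((expR (complex.Re z))%:C) * (cos (complex.Im z) +i* sin (complex.Im z)).

Definition cdot d (x y : 'cV[C]_d) : C := \sum_(j < d) x j 0 * conjc (y j 0).

Definition vnorm d (x : 'cV[C]_d) : R := Num.sqrt (\sum_(j < d) cnorm2 (x j 0)).

Definition imnorm d (x : 'cV[C]_d) : R := Num.sqrt (\sum_(j < d) (complex.Im (x j 0)) ^+ 2).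

Definition opnorm d (M : 'M[C]_d) : R :=
  sup [set vnorm (M *m x) | x in [set x : 'cV[C]_d | vnorm x <= 1]].

Definition intC (z : int) : C := z%:~R.
Definition cmx d (A : 'M[int]_d) : 'M[C]_d := map_mx intC A.
Definition cvec d (n : 'cV[int]_d) : 'cV[C]_d := map_mx intC n.

Definition beta d (A : 'M[int]_d) : R := (opnorm (invmx (cmx A^T)))^-1.

End Defs.

Definition expansive (R : realType) d (A : 'M[int]_d) : Prop :=
  forall lam : R[i], eigenvalue (@cmx R d A) lam -> 1 < cabs lam.

(* dot product of integer vectors (conjugation is trivial on Z) *)
Definition idot d (x y : 'cV[int]_d) : int := \sum_(j < d) x j 0 * y j 0.

Definition inAZ d (A : 'M[int]_d) (v : 'cV[int]_d) : Prop :=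
  exists u : 'cV[int]_d, v = A *m u.

(* Lambda_0 = Z^d cap [-N0,N0]^d, as an explicit (duplicate-free) list *)
Definition lam0 d (N0 : nat) : seq 'cV[int]_d :=
  [seq \col_(i < d) ((f i : nat)%:Z - N0%:Z) | f : {ffun 'I_d -> 'I_(N0.*2.+1)}].

Definition m0 (R : realType) d (N0 : nat) (h : 'cV[int]_d -> R[i]) (t : 'cV[R[i]]_d) : R[i] :=
  (Num.sqrt (2 : R))^-1%:C *
  \sum_(n <- lam0 d N0) h n * cexp (- ('i * cdot (@cvec R d n) t))%R.

Definition inCoset d (A : 'M[int]_d) (c n : 'cV[int]_d) : Prop :=
  exists a, inAZ A a /\ n = c + a.
Definition inNegCoset d (A : 'M[int]_d) (c n : 'cV[int]_d) : Prop :=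
  exists a, inAZ A a /\ n = c - a.

Definition ATinvpow (R : realType) d (A : 'M[int]_d) (j : nat) (x : 'cV[R[i]]_d) : 'cV[R[i]]_d :=
  iter j (fun y => invmx (@cmx R d A^T) *m y) x.

From HB Require Import structures.
From mathcomp Require Import all_boot all_order all_algebra.
From mathcomp Require Import boolp classical_sets reals sequences exp trigo.
From mathcomp Require Import complex.
From mathcomp Require Import normedtype derive.
From mathcomp Require Import ring lra.
Import Order.TTheory GRing.Theory Num.Theory numFieldNormedType.Exports.
Local Open Scope ring_scope.
Local Open Scope complex_scope.

(* Only the support and the normalisation of the filter matter.  Put
   y = (A^tau)^{-j} x.  Since (A^tau)^{-1} is a real matrix of norm 1/beta,
   |y| <= |x|/beta^j and |Im y| <= |Im x|/beta^j.  Every frequency n of m_0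
   has |n_k| <= N_0, so |n o y| <= d N_0 |y| and Re(-i n o y) = Im(n o y)
   <= d N_0 |Im y|.  Hence |m_0(y)| <= H e^{d N_0 |Im y|} with H = sum |h_n|,
   and, as m_0(0) = 1 and |e^z - 1| <= 3 |z| e^{|z|}, also
   |m_0(y) - 1| <= C |y| when |y| <= 1.  The first bound is used when
   |x|/beta^j > 1 and the second otherwise; this gives B_0 = d N_0. *)

Section ComplexModulus.
Context {R : realType}.
Implicit Types (a b : R) (z w : R[i]).

Lemma cabsE z : `|z| = (cabs z)%:C.
Proof. by rewrite normc_def. Qed.

Lemma cabs_ge0 z : 0 <= cabs z.
Proof. exact: sqrtr_ge0. Qed.

Lemma cabsD z w : cabs (z + w) <= cabs z + cabs w.
Proof. by rewrite -lecR rmorphD /= -!cabsE ler_normD. Qed.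

Lemma cabsM z w : cabs (z * w) = cabs z * cabs w.
Proof. by apply: complexI; rewrite rmorphM /= -!cabsE normrM. Qed.

Lemma cabsN z : cabs (- z) = cabs z.
Proof. by apply: complexI; rewrite -!cabsE normrN. Qed.

Lemma cabsR a : cabs a%:C = `|a|.
Proof. by rewrite /cabs /cnorm2 /= expr0n /= addr0 sqrtr_sqr. Qed.

Lemma cabsJ z : cabs (conjc z) = cabs z.
Proof. by case: z => a b; rewrite /cabs /cnorm2 /= sqrrN. Qed.

Lemma cabs1 : cabs (1 : R[i]) = 1.
Proof. by rewrite /cabs /cnorm2 /= expr0n expr1n addr0 sqrtr1. Qed.

Lemma cabsi : cabs ('i%C : R[i]) = 1.
Proof. by rewrite /cabs /cnorm2 /= expr0n /= add0r expr1n sqrtr1. Qed.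

Lemma cabs_sum I (s : seq I) (P : pred I) (F : I -> R[i]) :
  cabs (\sum_(i <- s | P i) F i) <= \sum_(i <- s | P i) cabs (F i).
Proof.
rewrite -lecR rmorph_sum /= -cabsE; apply: le_trans (ler_norm_sum _ _ _) _.
by apply: ler_sum => i _; rewrite cabsE.
Qed.

Lemma normr_Re_le_cabs z : `|complex.Re z| <= cabs z.
Proof.
rewrite /cabs /cnorm2 -sqrtr_sqr ler_sqrt ?addr_ge0 ?sqr_ge0 //.
by rewrite lerDl sqr_ge0.
Qed.

Lemma normr_Im_le_cabs z : `|complex.Im z| <= cabs z.
Proof.
rewrite /cabs /cnorm2 -sqrtr_sqr ler_sqrt ?addr_ge0 ?sqr_ge0 //.
by rewrite lerDr sqr_ge0.
Qed.

Lemma cabs_complex_le a b : cabs (a +i* b) <= `|a| + `|b|.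
Proof.
have -> : a +i* b = a%:C + b%:C * 'i%C.
  by apply/eqP; rewrite eq_complex /=; apply/andP; split; apply/eqP; ring.
by apply: le_trans (cabsD _ _) _; rewrite cabsM cabsi mulr1 !cabsR.
Qed.

Lemma cabs_cexp z : cabs (cexp z) = expR (complex.Re z).
Proof.
rewrite /cexp cabsM cabsR ger0_norm ?expR_ge0 //.
by rewrite /cabs /cnorm2 /= cos2Dsin2 sqrtr1 mulr1.
Qed.

Lemma lipschitz1_of_derive {f df : R -> R} :
  (forall x : R, is_derive x (1 : R) f (df x)) -> (forall x, `|df x| <= 1) ->
  forall x y, `|f x - f y| <= `|x - y|.
Proof.
move=> f_df df_le1 x y; wlog yx : x y / y <= x.
  by move=> H; case: (leP y x) => [/H//|/ltW /H]; rewrite distrC (distrC x).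
have [|c _ ->] := @MVT_segment _ f df _ _ yx.
  by apply: derivable_within_continuous => z _; exact: ex_derive.
by rewrite normrM -[leRHS]mul1r ler_wpM2r.
Qed.

Lemma cabs_expiB1_le b : cabs ((cos b +i* sin b) - 1) <= 2%:R * `|b|.
Proof.
have -> : (cos b +i* sin b) - 1 = (cos b - 1) +i* sin b.
  by apply/eqP; rewrite eq_complex /= oppr0 addr0 !eqxx.
apply: le_trans (cabs_complex_le _ _) _; rewrite mulr2n mulrDl mul1r.
apply: lerD.
- have /(_ _ b 0) := lipschitz1_of_derive (@is_derive_cos R).
  by rewrite cos0 subr0; apply=> x; rewrite normrN sin_max.
- have := lipschitz1_of_derive (@is_derive_sin R) (@cos_max R) b 0.
  by rewrite sin0 !subr0.
Qed.

Lemma normr_expRB1_le a : `|expR a - 1| <= `|a| * expR `|a|.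
Proof.
have Da_le := expR_ge1Dx a; have DNa_le := expR_ge1Dx (- a).
have expRMN := expRxMexpNx_1 a; have expR_pos := expR_gt0 a.
have [a0|a0] := leP 0 a.
  rewrite (ger0_norm a0) ger0_norm; last by rewrite subr_ge0; lra.
  have : 0 <= expR a * (expR (- a) - (1 - a)) by rewrite mulr_ge0 ?expR_ge0 ?subr_ge0.
  nra.
have expR_lt1 : expR a < 1 by rewrite expR_lt1.
rewrite !ltr0_norm ?subr_lt0 //.
have : 0 <= - a * (expR (- a) - 1) by rewrite mulr_ge0 //; lra.
nra.
Qed.

Lemma cabs_cexpB1_le z : cabs (cexp z - 1) <= 3%:R * cabs z * expR (cabs z).
Proof.
case: z => a b; rewrite /cexp /=; set u := cos b +i* sin b.
have -> : (expR a)%:C * u - 1 = (expR a - 1)%:C * u + (u - 1).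
  by rewrite rmorphB /= rmorph1; ring.
apply: le_trans (cabsD _ _) _.
have u1 : cabs u = 1 by rewrite /cabs /cnorm2 /= cos2Dsin2 sqrtr1.
rewrite cabsM cabsR u1 mulr1.
have := cabs_expiB1_le b; have := normr_expRB1_le a.
have := normr_Re_le_cabs (a +i* b); have := normr_Im_le_cabs (a +i* b).
set c := cabs (a +i* b) => /= b_le a_le.
have expR_le : expR `|a| <= expR c by rewrite ler_expR.
have expR_ge1 : 1 <= expR c by rewrite -expR0 ler_expR cabs_ge0.
have : `|a| * expR `|a| <= c * expR c by rewrite ler_pM ?expR_ge0.
have : c <= c * expR c by rewrite ler_peMr ?cabs_ge0.
lra.
Qed.

End ComplexModulus.

Section EuclideanNorm.
Context {R : realType} {d : nat}.
Implicit Types (v : 'cV[R[i]]_d) (M : 'M[R[i]]_d).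

Lemma cnorm2_ge0 (z : R[i]) : 0 <= cnorm2 z.
Proof. by rewrite /cnorm2 addr_ge0 ?sqr_ge0. Qed.

Lemma vnorm_ge0 v : 0 <= vnorm v.
Proof. exact: sqrtr_ge0. Qed.

Lemma vnorm0 : vnorm (0 : 'cV[R[i]]_d) = 0.
Proof. by rewrite /vnorm big1 ?sqrtr0 // => j _; rewrite mxE /cnorm2 /= expr0n addr0. Qed.

Lemma cabs_entry_le_vnorm v k : cabs (v k 0) <= vnorm v.
Proof.
rewrite /vnorm /cabs ler_sqrt; last by rewrite sumr_ge0 // => i _; exact: cnorm2_ge0.
by rewrite (bigD1 k) //= lerDl sumr_ge0 // => i _; exact: cnorm2_ge0.
Qed.

Lemma normr_Im_entry_le_imnorm v k : `|complex.Im (v k 0)| <= imnorm v.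
Proof.
rewrite /imnorm -sqrtr_sqr ler_sqrt; last by rewrite sumr_ge0 // => i _; exact: sqr_ge0.
by rewrite (bigD1 k) //= lerDl sumr_ge0 // => i _; exact: sqr_ge0.
Qed.

Lemma sqrtrD_le (a b : R) : 0 <= a -> 0 <= b ->
  Num.sqrt (a + b) <= Num.sqrt a + Num.sqrt b.
Proof.
move=> a0 b0; have sa := sqrtr_ge0 a; have sb := sqrtr_ge0 b.
rewrite -[leRHS]ger0_norm ?addr_ge0 // -sqrtr_sqr ler_sqrt ?sqr_ge0 //.
by rewrite sqrrD !sqr_sqrtr // lerD2r lerDl mulrn_wge0 ?mulr_ge0.
Qed.

Lemma sqrtr_sum_le I (s : seq I) (F : I -> R) : (forall i, 0 <= F i) ->
  Num.sqrt (\sum_(i <- s) F i) <= \sum_(i <- s) Num.sqrt (F i).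
Proof.
move=> F0; elim: s => [|x s IH]; first by rewrite !big_nil sqrtr0.
have sum_ge0 : 0 <= \sum_(i <- s) F i by exact: sumr_ge0.
by rewrite !big_cons (le_trans (sqrtrD_le _ _ (F0 x) sum_ge0)) ?lerD2l.
Qed.

Lemma vnorm_le_sum_cabs v : vnorm v <= \sum_k cabs (v k 0).
Proof. by apply: sqrtr_sum_le => i; exact: cnorm2_ge0. Qed.

Lemma vnormZ (a : R) v : vnorm (a%:C *: v) = `|a| * vnorm v.
Proof.
rewrite /vnorm (eq_bigr (fun j => a ^+ 2 * cnorm2 (v j 0))); last first.
  by move=> j _; rewrite mxE; case: (v j 0) => x y; rewrite /cnorm2 /=; ring.
by rewrite -mulr_sumr sqrtrM ?sqr_ge0 // sqrtr_sqr.
Qed.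

Lemma vnorm_mulmx_le_entries M v :
  vnorm (M *m v) <= (\sum_k \sum_l cabs (M k l)) * vnorm v.
Proof.
apply: le_trans (vnorm_le_sum_cabs _) _.
rewrite mulr_suml; apply: ler_sum => k _.
rewrite mxE mulr_suml; apply: le_trans (cabs_sum _ _ _ _) _; apply: ler_sum => l _.
by rewrite cabsM ler_wpM2l ?cabs_ge0 ?cabs_entry_le_vnorm.
Qed.

Lemma vnorm_mulmx_le_opnorm M v : vnorm v <= 1 -> vnorm (M *m v) <= opnorm M.
Proof.
move=> v1; apply: sup_upper_bound; last by exists v.
split; first by exists (vnorm (M *m 0)), 0; rewrite /= ?vnorm0 ?ler01.
exists (\sum_k \sum_l cabs (M k l)) => _ [u /= u1 <-].
apply: le_trans (vnorm_mulmx_le_entries M u) _; rewrite ler_piMr //.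
by rewrite sumr_ge0 // => k _; rewrite sumr_ge0 // => l _; exact: cabs_ge0.
Qed.

Lemma opnorm_ge0 M : 0 <= opnorm M.
Proof.
by apply: le_trans (vnorm_mulmx_le_opnorm M 0 _); rewrite ?vnorm_ge0 ?vnorm0 ?ler01.
Qed.

Lemma vnorm_mulmx_le M v : vnorm (M *m v) <= opnorm M * vnorm v.
Proof.
have [v0|v_neq0] := eqVneq (vnorm v) 0.
  by have := vnorm_mulmx_le_entries M v; rewrite v0 !mulr0.
have v_pos : 0 < vnorm v by rewrite lt_def v_neq0 vnorm_ge0.
have : vnorm ((vnorm v)^-1%:C *: v) <= 1.
  by rewrite vnormZ ger0_norm ?invr_ge0 ?vnorm_ge0 // mulVf.
move/(vnorm_mulmx_le_opnorm M).
by rewrite -scalemxAr vnormZ ger0_norm ?invr_ge0 ?vnorm_ge0 // ler_pdivrMl // mulrC.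
Qed.

End EuclideanNorm.

Section ImaginaryPart.
Context {R : realType} {d : nat}.
Implicit Types (v : 'cV[R[i]]_d).

Definition imvec (v : 'cV[R[i]]_d) : 'cV[R[i]]_d :=
  map_mx (fun z => (complex.Im z)%:C) v.

Lemma imnormE v : imnorm v = vnorm (imvec v).
Proof.
rewrite /imnorm /vnorm; congr Num.sqrt; apply: eq_bigr => j _.
by rewrite mxE /cnorm2 /= expr0n addr0.
Qed.

Lemma Im_sum I (s : seq I) (P : pred I) (F : I -> R[i]) :
  complex.Im (\sum_(i <- s | P i) F i) = \sum_(i <- s | P i) complex.Im (F i).
Proof. by apply: big_morph => // [[a b] [c e]]. Qed.

Lemma Im_mulRC (a : R) (z : R[i]) : complex.Im (a%:C * z) = a * complex.Im z.
Proof. by case: z => x y /=; rewrite mul0r addr0. Qed.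

Lemma imvec_mulmx_real (N : 'M[R]_d) v :
  imvec (map_mx (real_complex R) N *m v) = map_mx (real_complex R) N *m imvec v.
Proof.
apply/matrixP => i j; rewrite !mxE Im_sum rmorph_sum /=.
by apply: eq_bigr => l _; rewrite !mxE Im_mulRC rmorphM.
Qed.

Lemma vnorm_iter_mulmx_le (M : 'M[R[i]]_d) j v :
  vnorm (iter j (mulmx M) v) <= opnorm M ^+ j * vnorm v.
Proof.
elim: j => [|j IH] /=; first by rewrite expr0 mul1r.
apply: le_trans (vnorm_mulmx_le _ _) _.
by rewrite exprS -mulrA ler_wpM2l ?opnorm_ge0.
Qed.

Lemma imnorm_iter_mulmx_le (N : 'M[R]_d) j v :
  imnorm (iter j (mulmx (map_mx (real_complex R) N)) v) <=
    opnorm (map_mx (real_complex R) N) ^+ j * imnorm v.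
Proof.
set M := map_mx _ N; elim: j => [|j IH] /=; first by rewrite expr0 mul1r.
rewrite imnormE imvec_mulmx_real -/M; apply: le_trans (vnorm_mulmx_le _ _) _.
by rewrite -imnormE exprS -mulrA ler_wpM2l ?opnorm_ge0.
Qed.

Lemma intC_real (z : int) : @intC R z = (z%:~R : R)%:C.
Proof. by rewrite /intC rmorph_int. Qed.

Lemma invmx_cmx_real (B : 'M[int]_d) :
  invmx (@cmx R d B) = map_mx (real_complex R) (invmx (map_mx intr B)).
Proof.
rewrite map_invmx; congr invmx.
by apply/matrixP => i j; rewrite !mxE intC_real.
Qed.

End ImaginaryPart.

Section Frequencies.
Context {R : realType} {d : nat} {N : nat} {n : 'cV[int]_d}.
Hypothesis n_le : forall k, `|n k 0| <= N%:Z.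
Implicit Types (y : 'cV[R[i]]_d).

Lemma normr_intr_entry_le k : `|(n k 0)%:~R : R| <= N%:R.
Proof. by rewrite -intr_norm; have := n_le k; rewrite -(ler_int R). Qed.

Lemma mulrn_sum_ord (q : R) : N%:R *+ d * q = \sum_(k < d) N%:R * q.
Proof. by rewrite sumr_const card_ord mulrnAl. Qed.

Lemma cabs_cdot_le y : cabs (cdot (@cvec R d n) y) <= N%:R *+ d * vnorm y.
Proof.
rewrite mulrn_sum_ord; apply: le_trans (cabs_sum _ _ _ _) _; apply: ler_sum => k _.
rewrite !mxE intC_real cabsM cabsJ cabsR.
by rewrite ler_pM ?normr_ge0 ?cabs_ge0 ?normr_intr_entry_le ?cabs_entry_le_vnorm.
Qed.

Lemma Im_cdot_le y : complex.Im (cdot (@cvec R d n) y) <= N%:R *+ d * imnorm y.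
Proof.
rewrite mulrn_sum_ord Im_sum; apply: ler_sum => k _.
rewrite !mxE intC_real Im_mulRC; apply: le_trans (ler_norm _) _; rewrite normrM.
have -> : `|complex.Im (conjc (y k 0))| = `|complex.Im (y k 0)|.
  by case: (y k 0) => a b /=; rewrite normrN.
by rewrite ler_pM ?normr_ge0 ?normr_intr_entry_le ?normr_Im_entry_le_imnorm.
Qed.

End Frequencies.

Section FilterBounds.
Context {R : realType} {d : nat} {N0 : nat} {h : 'cV[int]_d -> R[i]}.
Hypothesis h_supp :
  forall n : 'cV[int]_d, (exists i : 'I_d, (N0%:Z < `|n i 0|)%R) -> h n = 0.
Implicit Types (y : 'cV[R[i]]_d).

Local Notation hnorm1 := (\sum_(n <- lam0 d N0) cabs (h n)).
Local Notation N := (N0%:R *+ d : R).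

Lemma frequency_le n : h n != 0 -> forall k, `|n k 0| <= N0%:Z.
Proof.
move=> hn0 k; rewrite leNgt; apply/negP => N0_lt.
by move/eqP: hn0; apply; apply: h_supp; exists k.
Qed.

Lemma cabs_filter_sum_le (F : 'cV[int]_d -> R[i]) (G : R) :
  (forall n, h n != 0 -> cabs (F n) <= G) ->
  cabs ((Num.sqrt 2)^-1%:C * \sum_(n <- lam0 d N0) h n * F n) <= hnorm1 * G.
Proof.
move=> F_le.
have sqrt2_ge1 : 1 <= Num.sqrt (2 : R) by rewrite -[leLHS]sqrtr1 ler_sqrt ?ler1n.
rewrite cabsM cabsR ger0_norm ?invr_ge0 ?sqrtr_ge0 //.
apply: le_trans (ler_wpM2l _ (cabs_sum _ _ _ _)) _; first by rewrite invr_ge0 sqrtr_ge0.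
rewrite -[leRHS]mul1r; apply: ler_pM; rewrite ?invr_ge0 ?sqrtr_ge0 ?invf_le1 //.
- by apply: sumr_ge0 => n _; exact: cabs_ge0.
- exact: lt_le_trans sqrt2_ge1.
rewrite mulr_suml; apply: ler_sum => n _; rewrite cabsM.
have [->|/F_le] := eqVneq (h n) 0; last by apply: ler_wpM2l; exact: cabs_ge0.
by rewrite cabsR normr0 !mul0r.
Qed.

Lemma Re_NiM (z : R[i]) : complex.Re (- ('i * z)) = complex.Im z.
Proof. by case: z => a b /=; ring. Qed.

Lemma cabs_NiM (z : R[i]) : cabs (- ('i * z)) = cabs z.
Proof. by rewrite cabsN cabsM cabsi mul1r. Qed.

Lemma cabs_m0_le y : cabs (m0 N0 h y) <= hnorm1 * expR (N * imnorm y).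
Proof.
apply: cabs_filter_sum_le => n /frequency_le n_le.
by rewrite cabs_cexp Re_NiM ler_expR (Im_cdot_le n_le).
Qed.

Hypothesis h_sum : \sum_(n <- lam0 d N0) h n = (Num.sqrt (2 : R))%:C.

Lemma m0B1E y : m0 N0 h y - 1 = (Num.sqrt 2)^-1%:C *
  \sum_(n <- lam0 d N0) h n * (cexp (- ('i * cdot (@cvec R d n) y)) - 1).
Proof.
have normalised : (Num.sqrt (2 : R))^-1%:C * \sum_(n <- lam0 d N0) h n = 1.
  by rewrite h_sum -rmorphM /= mulVf ?gt_eqF ?sqrtr_gt0 ?ltr0n.
rewrite -[in LHS]normalised /m0 -mulrBr -sumrB; congr (_ * _).
by apply: eq_bigr => n _; rewrite mulrBr mulr1.
Qed.

Lemma cabs_m0B1_le y : vnorm y <= 1 ->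
  cabs (m0 N0 h y - 1) <= hnorm1 * (3%:R * N * expR N) * vnorm y.
Proof.
move=> y_le1; rewrite m0B1E -mulrA; apply: cabs_filter_sum_le => n /frequency_le n_le.
apply: le_trans (cabs_cexpB1_le _) _; rewrite cabs_NiM.
have cdot_le := cabs_cdot_le n_le y; set c := cabs _ in cdot_le *.
have c_le : c <= N by apply: le_trans cdot_le _; rewrite ler_piMr ?mulrn_wge0.
have : c * expR c <= N * vnorm y * expR N by rewrite ler_pM ?cabs_ge0 ?expR_ge0 ?ler_expR.
rewrite -!mulrA [expR N * _]mulrC; lra.
Qed.

End FilterBounds.

Lemma le_min_bound {R : realType} (m H K E t : R) :
  0 <= H -> 0 <= K -> 1 <= E -> 0 <= t ->
  m <= H * E -> (t <= 1 -> m <= 1 + K * t) ->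
  m <= (1 + (H + K) * Num.min 1 t) * E.
Proof.
move=> H0 K0 E1 t0 m_le_large m_le_small.
have [t_le1|t_gt1] := leP t 1.
  have := m_le_small t_le1.
  have : 0 <= (1 + (H + K) * t) * (E - 1).
    by rewrite mulr_ge0 ?subr_ge0 // addr_ge0 // mulr_ge0 // addr_ge0.
  have : 0 <= H * t by rewrite mulr_ge0.
  nra.
rewrite mulr1.
have : 0 <= (1 + K) * E by rewrite mulr_ge0 ?addr_ge0 // (le_trans ler01).
nra.
Qed.

Theorem lemma8p4 (R : realType) (d : nat) (A : 'M[int]_d) (lA qA : 'cV[int]_d)
  (N0 : nat) (h : 'cV[int]_d -> R[i])
  (hexp : @expansive R d A)
  (hdet : `|\det A| = 2 :> int)
  (hAAT : forall v : 'cV[int]_d, inAZ A v <-> inAZ A^T v)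
  (hl : forall n : 'cV[int]_d,
      (inCoset A lA n \/ inAZ A n) /\ ~ (inCoset A lA n /\ inAZ A n))
  (hq0 : forall m : 'cV[int]_d, inAZ A m -> (2 %| idot qA m)%Z)
  (hq1 : forall m : 'cV[int]_d, inCoset A lA m -> ~~ (2 %| idot qA m)%Z)
  (h4 : forall m n : 'cV[int]_d, inAZ A m -> forall k : 'cV[int]_d,
      (inNegCoset A n k \/ inCoset A (lA - m - n) k) /\
      ~ (inNegCoset A n k /\ inCoset A (lA - m - n) k))
  (h5 : forall m n : 'cV[int]_d, inCoset A lA m -> forall k : 'cV[int]_d,
      inNegCoset A n k <-> inCoset A (lA - m - n) k)
  (horth : forall k : 'cV[int]_d, inAZ A k ->
      \sum_(n <- lam0 d N0) h n * conjc (h (n + k)) = (k == 0)%:R)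
  (hsum : \sum_(n <- lam0 d N0) h n = (Num.sqrt (2 : R))%:C)
  (hsupp : forall n : 'cV[int]_d, (exists i : 'I_d, (N0%:Z < `|n i 0|)%R) -> h n = 0) :
  exists B0 C0 : R, forall (j : nat) (x : 'cV[R[i]]_d),
    cabs (m0 N0 h (ATinvpow A j x)) <=
      (1 + C0 * Num.min 1 (vnorm x / @beta R d A ^+ j)) *
      expR (B0 * imnorm x / @beta R d A ^+ j).
Proof.
set N : R := N0%:R *+ d; set H := \sum_(n <- lam0 d N0) cabs (h n).
set K := 3%:R * N * expR N.
have N_ge0 : 0 <= N by rewrite mulrn_wge0.
have H_ge0 : 0 <= H by rewrite sumr_ge0 // => n _; exact: cabs_ge0.
have K_ge0 : 0 <= K by rewrite mulr_ge0 ?expR_ge0 // mulr_ge0.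
exists N, (H + H * K) => j x.
have op_ge0 := exprn_ge0 j (opnorm_ge0 (invmx (@cmx R d A^T))).
have y_le : vnorm (ATinvpow A j x) <= vnorm x * opnorm (invmx (@cmx R d A^T)) ^+ j.
  by rewrite mulrC; exact: vnorm_iter_mulmx_le.
have Imy_le : imnorm (ATinvpow A j x) <= imnorm x * opnorm (invmx (@cmx R d A^T)) ^+ j.
  by rewrite mulrC /ATinvpow invmx_cmx_real; exact: imnorm_iter_mulmx_le.
rewrite /beta exprVn !invrK -mulrA.
apply: le_min_bound => //.
- exact: mulr_ge0.
- by rewrite -expR0 ler_expR !mulr_ge0 // imnormE vnorm_ge0.
- by rewrite mulr_ge0 ?vnorm_ge0.
- apply: le_trans (cabs_m0_le hsupp _) _.
  by rewrite ler_wpM2l // ler_expR ler_wpM2l.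
move=> t_le1; have y_le1 := le_trans y_le t_le1.
have := cabsD 1 (m0 N0 h (ATinvpow A j x) - 1); rewrite addrC subrK => /le_trans; apply.
rewrite cabs1 lerD2l.
apply: le_trans (cabs_m0B1_le hsupp hsum _ y_le1) _.
by rewrite ler_wpM2l // mulr_ge0.
Qed.
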